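(* Let $K\in K(2^{\mathbb{N}})$ be pseudo-tall. Then the ideal $\mathcal{I}_K$ has a Borel selector if and only if $K$ has a Borel pseudo-selector.
   Context: $K(2^{\mathbb{N}})$ is the hyperspace of closed subsets of $2^{\mathbb{N}}$; subsets of $\mathbb{N}$ are identified with elements of $2^{\mathbb{N}}$. $\downarrow K=\{x:\exists y\in K\ x\subseteq y\}$. $K$ is pseudo-tall if every infinite $x\subseteq\mathbb{N}$ has an infinite subset in $\downarrow K$. $\mathcal{I}_K$ is the ideal generated by $K$: $x\in\mathcal{I}_K$ iff $x\subseteq y_0\cup\dots\cup y_{n-1}$ for some $y_0,\dots,y_{n-1}\in K$. A Borel selector for a tall family $\mathcal{C}$ is a Borel $S:2^{\mathbb{N}}\to2^{\mathbb{N}}$ with $S(x)\subseteq x$, $S(x)\in\mathcal{C}$, and $S(x)$ infinite whenever $x$ is infinite. A Borel pseudo-selector for $K$ is a Borel $S:2^{\mathbb{N}}\to2^{\mathbb{N}}$ with $S(x)\subseteq x$, $S(x)\in\downarrow K$, and $S(x)$ infinite whenever $x$ is infinite. *)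

From Stdlib Require Import List Arith.

(* 2^N, identified with subsets of N *)
Definition cantor := nat -> bool.

Definition subsetN (x y : cantor) : Prop := forall n, x n = true -> y n = true.

Definition infiniteN (x : cantor) : Prop := forall m, exists n, m <= n /\ x n = true.

(* product topology on 2^N: basic open sets are cylinders determined by finite initial segments *)
Definition open_set (U : cantor -> Prop) : Prop :=
  forall x, U x -> exists n, forall y, (forall k, k < n -> y k = x k) -> U y.

Definition closed_set (F : cantor -> Prop) : Prop := open_set (fun x => ~ F x).

Inductive borel : (cantor -> Prop) -> Prop :=
| borel_open : forall U, open_set U -> borel U
| borel_compl : forall A, borel A -> borel (fun x => ~ A x)
| borel_cunion : forall A : nat -> cantor -> Prop,
    (forall i, borel (A i)) -> borel (fun x => exists i, A i x)
| borel_ext : forall A B, borel A -> (forall x, A x <-> B x) -> borel B.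

Definition borel_fun (S : cantor -> cantor) : Prop :=
  forall U, open_set U -> borel (fun x => U (S x)).

Definition downK (K : cantor -> Prop) (x : cantor) : Prop :=
  exists y, K y /\ subsetN x y.

Definition pseudo_tall (K : cantor -> Prop) : Prop :=
  forall x, infiniteN x -> exists z, subsetN z x /\ infiniteN z /\ downK K z.

Definition ideal_gen (K : cantor -> Prop) (x : cantor) : Prop :=
  exists l : list cantor, (forall y, In y l -> K y) /\
    (forall n, x n = true -> exists y, In y l /\ y n = true).

Definition borel_selector (C : cantor -> Prop) (S : cantor -> cantor) : Prop :=
  borel_fun S /\
  (forall x, subsetN (S x) x) /\
  (forall x, C (S x)) /\
  (forall x, infiniteN x -> infiniteN (S x)).

Definition borel_pseudo_selector (K : cantor -> Prop) (S : cantor -> cantor) : Prop :=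
  borel_selector (downK K) S.

(* A pseudo-selector for K is already a selector for I_K, since down K is contained in
   I_K.  Conversely, for a in I_K call (j, m) admissible when some y in K leaves
   a /\ [m, oo) \ y coverable by j members of K, and let y be the leftmost such y for the
   lexicographically least admissible pair; select a /\ y.  If a /\ y were finite, then
   some a /\ [m', oo) would be covered by j members of K: for j = 0 this contradicts
   the infinitude of a, and otherwise one member can play the role of y, making
   (j - 1, m') admissible.  By compactness of K, admissibility and the leftmost witness
   can be read off finite stages, which makes the map a |-> a /\ y Borel; composing it
   with a Borel selector for I_K gives a Borel pseudo-selector. *)

From Stdlib Require Import List Arith Lia Classical ClassicalEpsilon Bool.
Import ListNotations.

Lemma borel_const (P : Prop) : borel (fun _ => P).
Proof. apply borel_open. intros x H. exists 0. auto. Qed.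

Lemma borel_or (A B : cantor -> Prop) : borel A -> borel B -> borel (fun x => A x \/ B x).
Proof.
  intros HA HB.
  apply borel_ext with (A := fun x => exists i, (if Nat.eqb i 0 then A else B) x).
  - apply borel_cunion. intros i. destruct (Nat.eqb i 0); auto.
  - intros x; split.
    + intros [i Hi]. destruct (Nat.eqb i 0); auto.
    + intros [H|H]; [exists 0 | exists 1]; simpl; auto.
Qed.

Lemma borel_and (A B : cantor -> Prop) : borel A -> borel B -> borel (fun x => A x /\ B x).
Proof.
  intros HA HB. eapply borel_ext.
  - apply borel_compl, borel_or; [apply borel_compl, HA | apply borel_compl, HB].
  - intros x; simpl; tauto.
Qed.

Lemma borel_impl (A B : cantor -> Prop) : borel A -> borel B -> borel (fun x => A x -> B x).
Proof.
  intros HA HB. eapply borel_ext.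
  - apply borel_or; [apply borel_compl, HA | exact HB].
  - intros x; simpl; tauto.
Qed.

Lemma borel_all (A : nat -> cantor -> Prop) :
  (forall i, borel (A i)) -> borel (fun x => forall i, A i x).
Proof.
  intros H. eapply borel_ext.
  - apply borel_compl, borel_cunion. intros i. apply borel_compl, H.
  - intros x; simpl; split.
    + intros H1 i. apply NNPP; intro; apply H1; eauto.
    + intros H1 [i Hi]; auto.
Qed.

Lemma borel_ex_list_of_length (n : nat) (A : list bool -> cantor -> Prop) :
  (forall s, borel (A s)) -> borel (fun x => exists s, length s = n /\ A s x).
Proof.
  revert A; induction n as [|n IH]; intros A H.
  - eapply borel_ext; [apply (H []) |]. intros x; split.
    + intros Hx. exists []. auto.
    + intros [[|b s] [Hs Hx]]; [exact Hx | discriminate].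
  - eapply borel_ext.
    + apply (IH (fun s x => A (true :: s) x \/ A (false :: s) x)).
      intros s. apply borel_or; apply H.
    + intros x; split.
      * intros [s [Hs [Hx|Hx]]]; eexists; split; try exact Hx; simpl; auto.
      * intros [[|[|] s] [Hs Hx]]; simpl in Hs; try discriminate;
          exists s; split; auto.
Qed.

Lemma borel_preimage (B : cantor -> Prop) (f : cantor -> cantor) :
  borel B -> borel_fun f -> borel (fun x => B (f x)).
Proof.
  intros HB Hf; induction HB.
  - apply Hf; auto.
  - apply borel_compl; auto.
  - apply borel_cunion; auto.
  - eapply borel_ext; eauto. intros x; apply H.
Qed.

Lemma borel_fun_comp (f g : cantor -> cantor) :
  borel_fun f -> borel_fun g -> borel_fun (fun x => f (g x)).
Proof. intros Hf Hg U HU. apply (borel_preimage (fun y => U (f y))); auto. Qed.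

Definition eq_upto (N : nat) (x y : cantor) : Prop := forall k, k < N -> x k = y k.

Definition extends (y : cantor) (s : list bool) : Prop :=
  forall k, k < length s -> y k = nth k s false.

Definition prefix (x : cantor) (N : nat) : list bool := map x (seq 0 N).

Lemma prefix_S x N : prefix x (S N) = prefix x N ++ [x N].
Proof. unfold prefix. rewrite seq_S, map_app. reflexivity. Qed.

Lemma length_prefix x N : length (prefix x N) = N.
Proof. unfold prefix. rewrite length_map, length_seq. reflexivity. Qed.

Lemma nth_prefix x N k : k < N -> nth k (prefix x N) false = x k.
Proof.
  intros Hk. unfold prefix.
  rewrite nth_indep with (d' := x 0) by (rewrite length_map, length_seq; auto).
  rewrite map_nth, seq_nth; auto.
Qed.

Lemma extends_prefix y x N : extends y (prefix x N) <-> eq_upto N y x.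
Proof.
  unfold extends, eq_upto. rewrite length_prefix.
  split; intros H k Hk; rewrite H, ?nth_prefix; auto.
Qed.

Lemma extends_snoc y s : extends y s -> extends y (s ++ [y (length s)]).
Proof.
  intros H k Hk. rewrite length_app in Hk; simpl in Hk.
  destruct (Nat.eq_dec k (length s)) as [->|Hne].
  - rewrite nth_middle. reflexivity.
  - rewrite app_nth1 by lia. apply H; lia.
Qed.

Lemma open_eq_upto (A : cantor -> Prop) (N : nat) :
  (forall x y, eq_upto N y x -> A x -> A y) -> open_set A.
Proof. intros H x Hx. exists N. intros y Hy. exact (H x y Hy Hx). Qed.

Lemma borel_fun_of_bits (f : cantor -> cantor) :
  (forall n, borel (fun x => f x n = true)) -> borel_fun f.
Proof.
  intros Hb U HU.
  apply borel_ext with (A := fun x => exists N, exists s, length s = N /\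
     ((forall y, extends y s -> U y) /\ (forall k, k < N -> f x k = nth k s false))).
  - apply borel_cunion; intros N. apply borel_ex_list_of_length. intros s.
    apply borel_and; [apply borel_const |].
    apply borel_all; intros k. apply borel_impl; [apply borel_const |].
    destruct (nth k s false); [apply Hb |].
    eapply borel_ext; [apply borel_compl, (Hb k) |].
    intros x; simpl. destruct (f x k); split; congruence.
  - intros x; split.
    + intros [N [s [<- [HsU Hf]]]]. apply HsU. exact Hf.
    + intros Hx. destruct (HU _ Hx) as [N HN]. exists N, (prefix (f x) N).
      rewrite length_prefix. split; [reflexivity | split].
      * intros y Hy. apply HN, extends_prefix, Hy.
      * intros k Hk. rewrite nth_prefix; auto.
Qed.

Lemma closed_limit (F : cantor -> Prop) (z : cantor) :
  closed_set F -> (forall n, exists y, F y /\ eq_upto n y z) -> F z.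
Proof.
  intros hF H. apply NNPP; intro Hz. destruct (hF z Hz) as [n Hn].
  destruct (H n) as [y [Hy Hyz]]. exact (Hn y Hyz Hy).
Qed.

Section Leftmost.

Variable T : list bool -> Prop.

Definition leftmost_bit (s : list bool) : bool :=
  if excluded_middle_informative (T (s ++ [false])) then false else true.

Fixpoint leftmost_prefix (n : nat) : list bool :=
  match n with
  | 0 => []
  | S n => leftmost_prefix n ++ [leftmost_bit (leftmost_prefix n)]
  end.

Definition leftmost (k : nat) : bool := leftmost_bit (leftmost_prefix k).

Lemma leftmost_prefixE n : leftmost_prefix n = prefix leftmost n.
Proof.
  induction n as [|n IH]; [reflexivity |].
  rewrite prefix_S, <- IH. reflexivity.
Qed.

Hypothesis T_nil : T [].
Hypothesis T_pruned : forall s, T s -> T (s ++ [false]) \/ T (s ++ [true]).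

Lemma leftmost_prefix_in n : T (leftmost_prefix n).
Proof.
  induction n as [|n IH]; [exact T_nil |]. simpl. unfold leftmost_bit.
  destruct excluded_middle_informative as [H|H]; [exact H |].
  destruct (T_pruned _ IH); [contradiction | assumption].
Qed.

End Leftmost.

Section LeftmostBorel.

Variable T : cantor -> list bool -> Prop.
Hypothesis T_borel : forall s, borel (fun x => T x s).

Lemma leftmost_bit_borel s b : borel (fun x => leftmost_bit (T x) s = b).
Proof.
  eapply borel_ext with (A := fun x => (T x (s ++ [false]) /\ b = false) \/
                                        (~ T x (s ++ [false]) /\ b = true)).
  - apply borel_or; apply borel_and; try apply borel_const; auto. apply borel_compl; auto.
  - intros x. unfold leftmost_bit. destruct excluded_middle_informative; intuition congruence.
Qed.

Lemma leftmost_prefix_borel n s : borel (fun x => leftmost_prefix (T x) n = s).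
Proof.
  revert s; induction n as [|n IH]; intros s; [apply (borel_const ([] = s)) |].
  eapply borel_ext with (A := fun x => exists s0, length s0 = n /\
     (leftmost_prefix (T x) n = s0 /\
      ((leftmost_bit (T x) s0 = false /\ s = s0 ++ [false]) \/
       (leftmost_bit (T x) s0 = true /\ s = s0 ++ [true])))).
  - apply borel_ex_list_of_length. intros s0. apply borel_and; [apply IH |].
    apply borel_or; apply borel_and; auto using leftmost_bit_borel, borel_const.
  - intros x; simpl; split.
    + intros [s0 [_ [-> [[-> ->]|[-> ->]]]]]; reflexivity.
    + intros <-. exists (leftmost_prefix (T x) n).
      rewrite leftmost_prefixE, length_prefix, <- leftmost_prefixE.
      do 2 (split; [reflexivity |]).
      destruct leftmost_bit; auto.
Qed.

Lemma leftmost_borel k : borel (fun x => leftmost (T x) k = true).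
Proof.
  eapply borel_ext with (A := fun x => exists s, length s = k /\
     (leftmost_prefix (T x) k = s /\ leftmost_bit (T x) s = true)).
  - apply borel_ex_list_of_length. intros s.
    apply borel_and; auto using leftmost_prefix_borel, leftmost_bit_borel.
  - intros x; split.
    + intros [s [_ [<- H]]]. exact H.
    + intros H. exists (leftmost_prefix (T x) k).
      rewrite leftmost_prefixE, length_prefix, <- leftmost_prefixE. auto.
Qed.

End LeftmostBorel.

(* For closed F and local, antitone P the leftmost branch of this tree lies in F and
   satisfies every P N (leftmost_fin_tree): the only use of compactness. *)
Definition fin_tree (F : cantor -> Prop) (P : nat -> cantor -> Prop) (s : list bool) : Prop :=
  forall N, exists y, F y /\ extends y s /\ P N y.

Section FinTree.

Variables (F : cantor -> Prop) (P : nat -> cantor -> Prop).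
Hypothesis P_antitone : forall N N' y, N' <= N -> P N y -> P N' y.

Lemma fin_tree_pruned s :
  fin_tree F P s -> fin_tree F P (s ++ [false]) \/ fin_tree F P (s ++ [true]).
Proof.
  intros Hs. apply NNPP. intros Hno.
  apply not_or_and in Hno as [H0 H1].
  apply not_all_ex_not in H0 as [N0 H0]. apply not_all_ex_not in H1 as [N1 H1].
  destruct (Hs (max N0 N1)) as [y [Fy [Hys HPy]]].
  pose proof (extends_snoc y s Hys) as Hys'.
  destruct (y (length s)); [apply H1 | apply H0]; exists y; repeat split; auto;
    apply P_antitone with (max N0 N1); auto; lia.
Qed.

Hypothesis F_closed : closed_set F.
Hypothesis P_local : forall N y y', eq_upto N y y' -> P N y -> P N y'.

Lemma leftmost_fin_tree :
  fin_tree F P [] -> F (leftmost (fin_tree F P)) /\ forall N, P N (leftmost (fin_tree F P)).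
Proof.
  intros Hnil. set (z := leftmost (fin_tree F P)).
  assert (Hz : forall n, exists y, F y /\ eq_upto n y z /\ P n y).
  { intros n.
    destruct (leftmost_prefix_in _ Hnil fin_tree_pruned n n) as [y [Fy [Hy HPy]]].
    rewrite leftmost_prefixE, extends_prefix in Hy. eauto. }
  split.
  - apply closed_limit; auto. intros n. destruct (Hz n) as [y [? [? _]]]. eauto.
  - intros N. destruct (Hz N) as [y [_ [Hy HPy]]].
    apply (P_local N y); auto.
Qed.

End FinTree.

Definition covered (K : cantor -> Prop) (j N : nat) (b : cantor) : Prop :=
  exists l : list cantor, length l <= j /\ (forall y, In y l -> K y) /\
    forall n, n < N -> b n = true -> exists y, In y l /\ y n = true.

Definition tailN (m : nat) (a : cantor) : cantor := fun n => (m <=? n) && a n.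

Definition diffN (b y : cantor) : cantor := fun n => b n && negb (y n).

Lemma tailN_max_subset_diffN m M a y :
  (forall n, M <= n -> a n = true -> y n = false) ->
  subsetN (tailN (max m M) a) (diffN (tailN m a) y).
Proof.
  intros Hy n Hn. unfold tailN in Hn. apply andb_true_iff in Hn as [Hle Han].
  apply Nat.leb_le in Hle. unfold diffN, tailN.
  rewrite Han, (Hy n), (proj2 (Nat.leb_le m n)); auto; lia.
Qed.

Section Covered.

Variable K : cantor -> Prop.

Lemma covered_local j N b b' : eq_upto N b b' -> covered K j N b -> covered K j N b'.
Proof.
  intros H [l [Hl [HK Hc]]]. exists l; repeat split; auto.
  intros n Hn Hb. apply Hc; auto. rewrite H; auto.
Qed.

Lemma covered_antitone j N N' b : N' <= N -> covered K j N b -> covered K j N' b.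
Proof.
  intros H [l [Hl [HK Hc]]]. exists l; repeat split; auto.
  intros n Hn. apply Hc. lia.
Qed.

Lemma covered_sub j N b b' : subsetN b b' -> covered K j N b' -> covered K j N b.
Proof. intros H [l [Hl [HK Hc]]]. exists l; repeat split; auto. Qed.

Lemma covered_S j N b : covered K j N b -> covered K (S j) N b.
Proof. intros [l [Hl Hc]]. exists l. split; [lia | exact Hc]. Qed.

Lemma covered_0 N b n : covered K 0 N b -> n < N -> b n = false.
Proof.
  intros [[|y l] [Hl [_ Hc]]] Hn; [| simpl in Hl; lia].
  destruct (b n) eqn:Hb; auto. destruct (Hc n Hn Hb) as [y [[] _]].
Qed.

Lemma covered_peel y0 j N b :
  K y0 -> covered K (S j) N b -> exists y, K y /\ covered K j N (diffN b y).
Proof.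
  intros Ky0 [[|y l] [Hl [HK Hc]]].
  - exists y0. split; auto. exists []. repeat split; [simpl; lia | intros ? [] |].
    intros n Hn Hb. apply Hc; auto. unfold diffN in Hb.
    apply andb_true_iff in Hb as [Hb _]. exact Hb.
  - exists y. split; [apply HK; left; reflexivity |].
    exists l. repeat split; [simpl in Hl; lia | intros z Hz; apply HK; right; exact Hz |].
    intros n Hn Hb. unfold diffN in Hb. apply andb_true_iff in Hb as [Hb Hy].
    destruct (Hc n Hn Hb) as [z [[<-|Hz] Hzn]].
    + rewrite Hzn in Hy. discriminate.
    + eauto.
Qed.

Lemma covered_of_ideal_gen a : ideal_gen K a -> exists j, forall N, covered K j N a.
Proof. intros [l [HK Hc]]. exists (length l). intros N. exists l. auto. Qed.

End Covered.

(* Admissibility is stated at finite stages, so that it is open in a for each stage. *)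
Definition witness_tree (K : cantor -> Prop) (a : cantor) (j m : nat) : list bool -> Prop :=
  fin_tree K (fun N y => covered K j N (diffN (tailN m a) y)).

Definition admissible K a j m : Prop := witness_tree K a j m [].

Definition least_admissible K a j m : Prop :=
  admissible K a j m /\ (forall j' m', admissible K a j' m' -> j <= j') /\
  (forall m', admissible K a j m' -> m <= m').

Definition witness K a j m : cantor := leftmost (witness_tree K a j m).

Definition pseudo_select (K : cantor -> Prop) (a : cantor) : cantor := fun n =>
  if excluded_middle_informative
       (exists j m, least_admissible K a j m /\ a n = true /\ witness K a j m n = true)
  then true else false.

Section PseudoSelect.

Variable K : cantor -> Prop.

Lemma pseudo_select_true a n : pseudo_select K a n = true <->
  exists j m, least_admissible K a j m /\ a n = true /\ witness K a j m n = true.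
Proof. unfold pseudo_select. destruct excluded_middle_informative; intuition discriminate. Qed.

Lemma pseudo_select_subset a : subsetN (pseudo_select K a) a.
Proof. intros n Hn. apply pseudo_select_true in Hn as [j [m [_ [H _]]]]. exact H. Qed.

Lemma least_admissible_unique a j m j' m' :
  least_admissible K a j m -> least_admissible K a j' m' -> j = j' /\ m = m'.
Proof.
  intros [H1 [H2 H3]] [H1' [H2' H3']].
  assert (j = j') as <- by (apply Nat.le_antisymm; eauto).
  split; [reflexivity | apply Nat.le_antisymm; auto].
Qed.

Lemma least_admissible_exists a :
  (exists j m, admissible K a j m) -> exists j m, least_admissible K a j m.
Proof.
  intros Hex.
  destruct (dec_inh_nat_subset_has_unique_least_element (fun j => exists m, admissible K a j m))
    as [j [[[m0 Hm0] Hj] _]]; [intros; apply classic | exact Hex |].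
  destruct (dec_inh_nat_subset_has_unique_least_element (admissible K a j))
    as [m [[Hm Hmin] _]]; [intros; apply classic | eauto |].
  exists j, m. repeat split; eauto.
Qed.

Lemma witness_tree_borel j m s : borel (fun a => witness_tree K a j m s).
Proof.
  apply borel_all. intros N. apply borel_open, (open_eq_upto _ N).
  intros a a' Ha [y [Ky [Hy Hc]]]. exists y. repeat split; auto.
  apply covered_local with (b := diffN (tailN m a) y); [| exact Hc].
  intros k Hk. unfold diffN, tailN. rewrite Ha; auto.
Qed.

Lemma least_admissible_borel j m : borel (fun a => least_admissible K a j m).
Proof.
  apply borel_and; [apply witness_tree_borel |].
  apply borel_and; repeat (apply borel_all; intros);
    apply borel_impl; first [apply witness_tree_borel | apply borel_const].
Qed.

Lemma pseudo_select_borel : borel_fun (pseudo_select K).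
Proof.
  apply borel_fun_of_bits. intros n.
  eapply borel_ext; [| intros a; symmetry; apply pseudo_select_true].
  apply borel_cunion; intros j. apply borel_cunion; intros m.
  apply borel_and; [apply least_admissible_borel |].
  apply borel_and; [apply borel_open, (open_eq_upto _ (S n)); intros a a' Ha <-; apply Ha; lia |].
  apply (leftmost_borel (fun a => witness_tree K a j m)), witness_tree_borel.
Qed.

Hypothesis K_closed : closed_set K.
Variable y0 : cantor.
Hypothesis K_y0 : K y0.

Lemma witness_good a j m : admissible K a j m ->
  K (witness K a j m) /\ forall N, covered K j N (diffN (tailN m a) (witness K a j m)).
Proof.
  apply leftmost_fin_tree; auto.
  - intros N N' y. apply covered_antitone.
  - intros N y y' Hy. apply covered_local.
    intros k Hk. unfold diffN. rewrite Hy; auto.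
Qed.

Lemma admissible_of_covered a j m :
  (forall N, covered K (S j) N (tailN m a)) -> admissible K a j m.
Proof.
  intros Hc N. destruct (covered_peel K y0 j N _ K_y0 (Hc N)) as [y [Ky Hy]].
  exists y. repeat split; auto. intros k Hk. simpl in Hk. lia.
Qed.

Lemma pseudo_select_downK a : downK K (pseudo_select K a).
Proof.
  destruct (classic (exists j m, least_admissible K a j m)) as [[j [m Hjm]]|Hno].
  - exists (witness K a j m). split; [apply witness_good, Hjm |].
    intros n Hn. apply pseudo_select_true in Hn as [j' [m' [Hjm' [_ H]]]].
    destruct (least_admissible_unique _ _ _ _ _ Hjm Hjm') as [<- <-]. exact H.
  - exists y0. split; auto. intros n Hn.
    apply pseudo_select_true in Hn as [j' [m' [Hjm' _]]]. exfalso; eauto.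
Qed.

Lemma pseudo_select_infinite a :
  ideal_gen K a -> infiniteN a -> infiniteN (pseudo_select K a).
Proof.
  intros Ha Hinf.
  destruct (covered_of_ideal_gen K a Ha) as [j0 Hj0].
  assert (Hadm : admissible K a j0 0).
  { apply admissible_of_covered. intros N. apply covered_S.
    apply (covered_sub _ _ _ _ a); auto.
    intros n Hn. apply andb_true_iff in Hn as [_ Hn]. exact Hn. }
  destruct (least_admissible_exists a (ex_intro _ j0 (ex_intro _ 0 Hadm)))
    as [j [m Hjm]].
  destruct (witness_good a j m (proj1 Hjm)) as [_ Hgood].
  apply NNPP. intros Hfin. apply not_all_ex_not in Hfin as [M HM].
  set (mx := max m M).
  assert (Hsel : forall n, M <= n -> a n = true -> witness K a j m n = false).
  { intros n Hn Han. destruct (witness K a j m n) eqn:Hw; [| reflexivity].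
    exfalso. apply HM. exists n. split; [exact Hn |].
    apply pseudo_select_true. exists j, m. auto. }
  assert (Htail : forall N, covered K j N (tailN mx a)).
  { intros N. apply covered_sub with (b' := diffN (tailN m a) (witness K a j m)).
    - apply tailN_max_subset_diffN, Hsel.
    - exact (Hgood N). }
  destruct j as [|j].
  - destruct (Hinf mx) as [n [Hn Han]].
    assert (Hn0 := covered_0 K (S n) _ n (Htail (S n)) (Nat.lt_succ_diag_r n)).
    unfold tailN in Hn0. rewrite Han, (proj2 (Nat.leb_le mx n) Hn) in Hn0. discriminate.
  - pose proof (proj1 (proj2 Hjm) j mx (admissible_of_covered a j mx Htail)). lia.
Qed.

End PseudoSelect.

Lemma pseudo_tall_inhabited K : pseudo_tall K -> exists y, K y.
Proof.
  intros hpt. destruct (hpt (fun _ => true)) as [z [_ [_ [y [Ky _]]]]].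
  - intros m. exists m. auto.
  - eauto.
Qed.

Lemma downK_ideal_gen K x : downK K x -> ideal_gen K x.
Proof.
  intros [y [Ky Hxy]]. exists [y]. split.
  - intros z [<-|[]]. exact Ky.
  - intros n Hn. exists y. split; [left |]; auto.
Qed.

Lemma borel_selector_mono (C C' : cantor -> Prop) S :
  (forall x, C x -> C' x) -> borel_selector C S -> borel_selector C' S.
Proof. intros HC [HB [Hsub [HS Hinf]]]. repeat split; auto. Qed.

Theorem mainTheorem15 (K : cantor -> Prop) (hK : closed_set K) (hpt : pseudo_tall K) :
  (exists S, borel_selector (ideal_gen K) S) <-> (exists S, borel_pseudo_selector K S).
Proof.
  destruct (pseudo_tall_inhabited K hpt) as [y0 Ky0].
  split; intros [S HS].
  - destruct HS as [HB [Hsub [HI Hinf]]].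
    exists (fun x => pseudo_select K (S x)). repeat split.
    + apply borel_fun_comp; auto using pseudo_select_borel.
    + intros x n Hn. apply Hsub, (pseudo_select_subset K _ n Hn).
    + intros x. apply (pseudo_select_downK K hK y0 Ky0).
    + intros x Hx. apply (pseudo_select_infinite K hK y0 Ky0); auto.
  - exists S. exact (borel_selector_mono _ _ S (downK_ideal_gen K) HS).
Qed.
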